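(* Let $G_0,G_1$ be groups, $X_i$ a right $G_i$-set and $p_i:X_i\to G_i$ augmented racks ($i=0,1$), with $G_1$ acting on $X_1$ by $(x,g)\mapsto x*g$ and $G_0$ acting on $X_0$ by $(y,h)\mapsto y\cdot h$. Let $\beta:G_1\to G_0$ be a group homomorphism and $\alpha:X_1\to X_0$ a map with $\alpha(x*g)=\alpha(x)\cdot\beta(g)$ and $p_0\circ\alpha=\beta\circ p_1$. Suppose there is a right action $(x,g)\mapsto x\circ g$ of $G_0$ on $X_1$ such that (1) $x*g=x\circ\beta(g)$ for all $g\in G_1$, $x\in X_1$; (2) $\alpha(x\circ g)=\alpha(x)\cdot g$ for all $g\in G_0$, $x\in X_1$; (3) $(y*p_1(x))\circ g=(y\circ g)*p_1(x\circ g)$ for all $g\in G_0$, $x,y\in X_1$. Then, equipping $X_1$ and $X_0$ with the rack structures $x\lhd y:=x*p_1(y)$ and $x\lhd y:=x\cdot p_0(y)$ respectively, and letting $X_0$ act on $X_1$ by $x\cdot y:=x\circ p_0(y)$, the map $\alpha:X_1\to X_0$ is a crossed module of racks.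
   Context: A (right) rack is a set with a binary operation $\lhd$ such that each $x\mapsto x\lhd y$ is bijective and $(x\lhd y)\lhd z=(x\lhd z)\lhd(y\lhd z)$. For a group $G$ and a right $G$-set $X$, a map $p:X\to G$ is an augmented rack if $p(x\cdot g)=g^{-1}p(x)g$ for all $x\in X,g\in G$; then $x\lhd y:=x\cdot p(y)$ is a rack operation on $X$. An action of a rack $S$ on a set $A$ is a family of bijections $a\mapsto a\cdot s$ with $(a\cdot s)\cdot s'=(a\cdot s')\cdot(s\lhd s')$; if $A$ is a rack it is by automorphisms if also $(a\lhd a')\cdot s=(a\cdot s)\lhd(a'\cdot s)$. A crossed module of racks is a rack morphism $\mu:A\to S$ with an action of $S$ on $A$ by automorphisms such that $\mu(a\cdot s)=\mu(a)\lhd s$ and $a\cdot\mu(a')=a\lhd a'$ for all $a,a'\in A$, $s\in S$. *)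

(* Plain Rocq + ssreflect's [bijective]. Groups may be infinite, so a group is
   given by its carrier and operations with the group axioms. *)
From mathcomp Require Import ssreflect ssrfun ssrbool.

Set Implicit Arguments.
Unset Strict Implicit.
Unset Printing Implicit Defensive.

Record group := Group {
  gcar :> Type;
  gmul : gcar -> gcar -> gcar;
  gone : gcar;
  ginv : gcar -> gcar;
  gmulA : forall x y z, gmul x (gmul y z) = gmul (gmul x y) z;
  gmul1g : forall x, gmul gone x = x;
  gmulg1 : forall x, gmul x gone = x;
  gmulVg : forall x, gmul (ginv x) x = gone;
  gmulgV : forall x, gmul x (ginv x) = gone
}.

Definition group_hom (G H : group) (f : G -> H) : Prop :=
  forall g h : G, f (gmul g h) = gmul (f g) (f h).

Definition right_action (G : group) (X : Type) (act : X -> G -> X) : Prop :=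
  (forall x, act x (gone G) = x) /\
  (forall x (g h : G), act (act x g) h = act x (gmul g h)).

Definition augmented_rack (G : group) (X : Type) (act : X -> G -> X)
    (p : X -> G) : Prop :=
  right_action act /\
  forall x (g : G), p (act x g) = gmul (gmul (ginv g) (p x)) g.

Definition aug_op (G : group) (X : Type) (act : X -> G -> X) (p : X -> G)
  : X -> X -> X := fun x y => act x (p y).

Definition is_rack (X : Type) (op : X -> X -> X) : Prop :=
  (forall y, bijective (fun x => op x y)) /\
  (forall x y z, op (op x y) z = op (op x z) (op y z)).

Definition rack_morphism (A S : Type) (opA : A -> A -> A) (opS : S -> S -> S)
    (f : A -> S) : Prop :=
  forall a a', f (opA a a') = opS (f a) (f a').

Definition rack_action (S : Type) (opS : S -> S -> S) (A : Type)
    (act : A -> S -> A) : Prop :=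
  (forall s, bijective (fun a => act a s)) /\
  (forall a s s', act (act a s) s' = act (act a s') (opS s s')).

Definition rack_action_by_aut (S : Type) (opS : S -> S -> S) (A : Type)
    (opA : A -> A -> A) (act : A -> S -> A) : Prop :=
  rack_action opS act /\
  (forall a a' s, act (opA a a') s = opA (act a s) (act a' s)).

Definition rack_crossed_module (A : Type) (opA : A -> A -> A)
    (S : Type) (opS : S -> S -> S) (act : A -> S -> A) (mu : A -> S) : Prop :=
  is_rack opA /\ is_rack opS /\ rack_morphism opA opS mu /\
  rack_action_by_aut opS opA act /\
  (forall a s, mu (act a s) = opS (mu a) s) /\
  (forall a a', act a (mu a') = opA a a').

From mathcomp Require Import ssreflect ssrfun ssrbool.

(* Every axiom of a crossed module of racks is either the rack axiom of an
   augmented rack, or one of the compatibilities of [alpha], [beta] and [circ]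
   read through [p0 (alpha x) = beta (p1 x)]. *)

Lemma gmul_conj (G : group) (g h : G) :
  gmul g (gmul (gmul (ginv g) h) g) = gmul h g.
Proof. by rewrite !gmulA gmulgV gmul1g. Qed.

Lemma right_action_bijective (G : group) (X : Type) (act : X -> G -> X) (g : G) :
  right_action act -> bijective (fun x => act x g).
Proof.
move=> [act1 actM]; exists (fun x => act x (ginv g)) => x /=.
  by rewrite actM gmulgV act1.
by rewrite actM gmulVg act1.
Qed.

Lemma augmented_rack_is_rack (G : group) (X : Type) (act : X -> G -> X)
    (p : X -> G) :
  augmented_rack act p -> is_rack (aug_op act p).
Proof.
move=> [[act1 actM] pJ]; split=> [y|x y z]; first exact: right_action_bijective.
by rewrite /aug_op !actM pJ gmul_conj.
Qed.

Lemma augmented_rack_action (G : group) (S A : Type) (dot : S -> G -> S)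
    (p : S -> G) (act : A -> G -> A) :
  augmented_rack dot p -> right_action act ->
  rack_action (aug_op dot p) (fun a s => act a (p s)).
Proof.
move=> [_ pJ] actG; split=> [s|a s s']; first exact: right_action_bijective.
by case: actG => _ actM; rewrite /aug_op !actM pJ gmul_conj.
Qed.

Lemma aug_op_morphism (G0 G1 : group) (X0 X1 : Type) (dot : X0 -> G0 -> X0)
    (star : X1 -> G1 -> X1) (p0 : X0 -> G0) (p1 : X1 -> G1) (beta : G1 -> G0)
    (alpha : X1 -> X0) :
  (forall x g, alpha (star x g) = dot (alpha x) (beta g)) ->
  (forall x, p0 (alpha x) = beta (p1 x)) ->
  rack_morphism (aug_op star p1) (aug_op dot p0) alpha.
Proof. by move=> alpha_star p0_alpha x y; rewrite /aug_op alpha_star p0_alpha. Qed.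

Theorem mainTheorem7
  (G0 G1 : group) (X0 X1 : Type)
  (dot : X0 -> G0 -> X0) (star : X1 -> G1 -> X1)
  (p0 : X0 -> G0) (p1 : X1 -> G1)
  (beta : G1 -> G0) (alpha : X1 -> X0) (circ : X1 -> G0 -> X1) :
  augmented_rack dot p0 ->
  augmented_rack star p1 ->
  group_hom beta ->
  (forall (x : X1) (g : G1), alpha (star x g) = dot (alpha x) (beta g)) ->
  (forall x : X1, p0 (alpha x) = beta (p1 x)) ->
  right_action circ ->
  (forall (g : G1) (x : X1), star x g = circ x (beta g)) ->
  (forall (g : G0) (x : X1), alpha (circ x g) = dot (alpha x) g) ->
  (forall (g : G0) (x y : X1),
      circ (star y (p1 x)) g = star (circ y g) (p1 (circ x g))) ->
  rack_crossed_module (aug_op star p1) (aug_op dot p0)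
    (fun (x : X1) (y : X0) => circ x (p0 y)) alpha.
Proof.
move=> aug0 aug1 _ alpha_star p0_alpha circG0 star_circ alpha_circ circ_aug.
split; first exact: augmented_rack_is_rack.
split; first exact: augmented_rack_is_rack.
split; first exact: aug_op_morphism.
split; first split.
- exact: augmented_rack_action.
- by move=> x y s; rewrite /aug_op circ_aug.
split=> [x s|x y]; first exact: alpha_circ.
by rewrite /aug_op p0_alpha star_circ.
Qed.
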